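(* Let $G$ be a graphical regular representation of a finitely generated group. Then every periodic vertex-coloring, edge-coloring or orientation of $G$ is strongly periodic.
   Context: For a group $\Gamma$ with finite generating set $S$ not containing the identity, $\mathrm{Cay}(\Gamma,S)$ has vertex set $\Gamma$, with $g,h$ adjacent iff $hg^{-1}\in S\cup S^{-1}$; it is a graphical regular representation of $\Gamma$ if its automorphism group consists exactly of the right multiplications by elements of $\Gamma$. A coloring or orientation is periodic if the subgroup of automorphisms preserving it has finitely many orbits on $V(G)$, and strongly periodic if this subgroup has finite index in $\mathrm{Aut}(G)$. *)

From Stdlib Require Import List.
Import ListNotations.

Set Implicit Arguments.

Record Grp := {
  carrier :> Type;
  gmul : carrier -> carrier -> carrier;
  gone : carrier;
  ginv : carrier -> carrier;
  gmulA : forall x y z, gmul x (gmul y z) = gmul (gmul x y) z;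
  gmul1l : forall x, gmul gone x = x;
  gmulVl : forall x, gmul (ginv x) x = gone
}.

Section Cayley.
Variable G : Grp.
Variable S : list G.

Inductive gen : G -> Prop :=
  | gen_one : gen (gone G)
  | gen_mul : forall s g, In s S -> gen g -> gen (gmul G s g)
  | gen_mulV : forall s g, In s S -> gen g -> gen (gmul G (ginv G s) g).

Definition generates : Prop := forall g : G, gen g.

Definition cay_adj (g h : G) : Prop :=
  exists s, In s S /\
    (gmul G h (ginv G g) = s \/ gmul G h (ginv G g) = ginv G s).

Definition is_aut (f : G -> G) : Prop :=
  (exists f' : G -> G, (forall x, f' (f x) = x) /\ (forall y, f (f' y) = y)) /\
  (forall x y, cay_adj (f x) (f y) <-> cay_adj x y).

Definition rmul (a : G) : G -> G := fun x => gmul G x a.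

Definition is_GRR : Prop :=
  (forall a : G, is_aut (rmul a)) /\
  (forall f, is_aut f -> exists a : G, forall x, f x = rmul a x).

(** Let P describe a subgroup of Aut(Cay(G,S)) (the stabilizer of some
    structure).  Periodic: finitely many orbits on the vertices. *)
Definition finitely_many_orbits (P : (G -> G) -> Prop) : Prop :=
  exists reps : list G, forall v : G,
    exists u f, In u reps /\ is_aut f /\ P f /\ f u = v.

(** Strongly periodic: finite index in Aut(Cay(G,S)), i.e. finitely many
    automorphisms f_1..f_n with Aut = \bigcup_i f_i \circ H. *)
Definition finite_index (P : (G -> G) -> Prop) : Prop :=
  exists reps : list (G -> G),
    (forall f, In f reps -> is_aut f) /\
    forall phi, is_aut phi ->
      exists f h, In f reps /\ is_aut h /\ P h /\ forall x, phi x = f (h x).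

Definition preserves_vcol (C : Type) (c : G -> C) (f : G -> G) : Prop :=
  forall x, c (f x) = c x.

(** Edge colorings: a color for each (unordered) edge, encoded as a
    function on ordered pairs that is symmetric on edges. *)
Definition is_ecol (C : Type) (c : G -> G -> C) : Prop :=
  forall x y, cay_adj x y -> c x y = c y x.

Definition preserves_ecol (C : Type) (c : G -> G -> C) (f : G -> G) : Prop :=
  forall x y, cay_adj x y -> c (f x) (f y) = c x y.

Definition is_orientation (o : G -> G -> Prop) : Prop :=
  (forall x y, o x y -> cay_adj x y) /\
  (forall x y, cay_adj x y -> (o x y <-> ~ o y x)).

Definition preserves_orientation (o : G -> G -> Prop) (f : G -> G) : Prop :=
  forall x y, cay_adj x y -> (o (f x) (f y) <-> o x y).

End Cayley.

Arguments gen {G} S _.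
Arguments generates {G} S.
Arguments cay_adj {G} S g h.
Arguments is_aut {G} S f.
Arguments rmul {G} a _.
Arguments is_GRR {G} S.
Arguments finitely_many_orbits {G} S P.
Arguments finite_index {G} S P.
Arguments preserves_vcol {G C} c f.
Arguments is_ecol {G} S {C} c.
Arguments preserves_ecol {G} S {C} c f.
Arguments is_orientation {G} S o.
Arguments preserves_orientation {G} S o f.

(* In a graphical regular representation every automorphism is a right
   translation [rmul a], so Aut acts simply transitively on the vertices.
   If a subgroup H has orbit representatives u_1, ..., u_n, then for
   phi = rmul a pick h in H and i with h u_i = a^-1; writing h = rmul b gives
   b a = u_i^-1, whence phi = rmul u_i^-1 \o h^-1.  So the n translations
   rmul u_i^-1 are coset representatives of H, provided H is closed under
   inverses, as every stabilizer of a coloring or orientation is. *)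
From Stdlib Require Import List.

Section GroupFacts.
Variable G : Grp.

Lemma gmulV (x : G) : gmul G x (ginv G x) = gone G.
Proof.
  transitivity (gmul G (ginv G (ginv G x)) (gmul G (ginv G x) (gmul G x (ginv G x)))).
  - rewrite gmulA, gmulVl, gmul1l. reflexivity.
  - rewrite (gmulA G (ginv G x) x), gmulVl, gmul1l, gmulVl. reflexivity.
Qed.

Lemma gmul1r (x : G) : gmul G x (gone G) = x.
Proof. rewrite <- (gmulVl G x), gmulA, gmulV, gmul1l. reflexivity. Qed.

Lemma gmul_eq_inv_rotate (u b a : G) :
  gmul G u b = ginv G a -> gmul G b a = ginv G u.
Proof.
  intros Hub.
  rewrite <- (gmul1l G (gmul G b a)), <- (gmulVl G u), <- gmulA,
    (gmulA G u b a), Hub, gmulVl, gmul1r.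
  reflexivity.
Qed.

End GroupFacts.

Section Automorphisms.
Variables (G : Grp) (S : list G).

Lemma is_aut_inv {h h' : G -> G} :
  is_aut S h -> (forall x, h' (h x) = x) -> (forall y, h (h' y) = y) ->
  is_aut S h'.
Proof.
  intros [_ Hadj] Hh'h Hhh'. split.
  - exists h. split; assumption.
  - intros x y. rewrite <- (Hadj (h' x) (h' y)), !Hhh'. reflexivity.
Qed.

Definition inverse_closed (P : (G -> G) -> Prop) : Prop :=
  forall h h', is_aut S h ->
    (forall x, h' (h x) = x) -> (forall y, h (h' y) = y) -> P h -> P h'.

Lemma GRR_finite_index (P : (G -> G) -> Prop) :
  is_GRR S -> inverse_closed P ->
  finitely_many_orbits S P -> finite_index S P.
Proof.
  intros [Hrmul_aut Haut_rmul] HPinv [reps Hreps].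
  exists (map (fun u => rmul (ginv G u)) reps). split.
  - intros f Hf. apply in_map_iff in Hf. destruct Hf as [u [<- _]]. apply Hrmul_aut.
  - intros phi Hphi. destruct (Haut_rmul phi Hphi) as [a Hphi_a].
    destruct (Hreps (ginv G a)) as [u [h [Hu [Hh [HPh Hhu]]]]].
    destruct (Haut_rmul h Hh) as [b Hh_b].
    pose proof Hh as [[h' [Hh'h Hhh']] _].
    assert (Hba : gmul G b a = ginv G u).
    { apply gmul_eq_inv_rotate. rewrite <- Hhu, Hh_b. reflexivity. }
    exists (rmul (ginv G u)), h'. split; [|split; [|split]].
    + apply in_map_iff. eauto.
    + exact (is_aut_inv Hh Hh'h Hhh').
    + exact (HPinv h h' Hh Hh'h Hhh' HPh).
    + intros x. rewrite Hphi_a. unfold rmul.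
      rewrite <- Hba, gmulA, <- (Hhh' x) at 1. rewrite Hh_b. reflexivity.
Qed.

Lemma preserves_vcol_inverse_closed (C : Type) (c : G -> C) :
  inverse_closed (preserves_vcol c).
Proof. intros h h' _ _ Hhh' Hc x. rewrite <- (Hc (h' x)), Hhh'. reflexivity. Qed.

Lemma preserves_ecol_inverse_closed (C : Type) (c : G -> G -> C) :
  inverse_closed (preserves_ecol S c).
Proof.
  intros h h' Hh Hh'h Hhh' Hc x y Hxy.
  assert (Hadj' : cay_adj S (h' x) (h' y)) by (apply (is_aut_inv Hh Hh'h Hhh'); exact Hxy).
  rewrite <- (Hc _ _ Hadj'), !Hhh'. reflexivity.
Qed.

Lemma preserves_orientation_inverse_closed (o : G -> G -> Prop) :
  inverse_closed (preserves_orientation S o).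
Proof.
  intros h h' Hh Hh'h Hhh' Ho x y Hxy.
  assert (Hadj' : cay_adj S (h' x) (h' y)) by (apply (is_aut_inv Hh Hh'h Hhh'); exact Hxy).
  rewrite <- (Ho _ _ Hadj'), !Hhh'. reflexivity.
Qed.

End Automorphisms.

Theorem corollary2p6 (G : Grp) (S : list G) :
  ~ In (gone G) S -> generates S -> is_GRR S ->
  (forall (C : Type) (c : G -> C),
     finitely_many_orbits S (preserves_vcol c) ->
     finite_index S (preserves_vcol c)) /\
  (forall (C : Type) (c : G -> G -> C), is_ecol S c ->
     finitely_many_orbits S (preserves_ecol S c) ->
     finite_index S (preserves_ecol S c)) /\
  (forall o : G -> G -> Prop, is_orientation S o ->
     finitely_many_orbits S (preserves_orientation S o) ->
     finite_index S (preserves_orientation S o)).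
Proof.
  intros _ _ HGRR. split; [|split].
  - intros C c. apply GRR_finite_index; [exact HGRR|].
    apply preserves_vcol_inverse_closed.
  - intros C c _. apply GRR_finite_index; [exact HGRR|].
    apply preserves_ecol_inverse_closed.
  - intros o _. apply GRR_finite_index; [exact HGRR|].
    apply preserves_orientation_inverse_closed.
Qed.
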